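(* Let $p$ be a prime and $b$ an integer with $1<b<\frac{p-1}{2}$. Then $|\mathrm{inv}_{1,b}|>4$.
   Context: Let $S=\mathbb{C}[x_1,x_2]$, $\zeta=e^{2\pi i/p}$, $G=\mathbb{Z}/p\mathbb{Z}=\langle\zeta\rangle$ acting on $S$ by $x_1\mapsto\zeta x_1$, $x_2\mapsto\zeta^bx_2$, with invariant ring $S^G_{1,b}$ (spanned by monomials $x_1^cx_2^d$ with $c+bd\equiv0\pmod p$). $\mathrm{inv}_{1,b}$ denotes the minimal set of monomial generators of $S^G_{1,b}$ as a $\mathbb{C}$-algebra: the nonconstant invariant monomials that are not a product of two nonconstant invariant monomials. *)

From mathcomp Require Import all_boot.
Set Implicit Arguments. Unset Strict Implicit. Unset Printing Implicit Defensive.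

(* A monomial x1^c x2^d of C[x1,x2] is encoded by its exponent pair (c,d). *)
Definition monomial := (nat * nat)%type.

Definition mon_mul (m1 m2 : monomial) : monomial := (m1.1 + m2.1, m1.2 + m2.2).

Definition nonconstant (m : monomial) : Prop := m <> (0, 0).

(* x1^c x2^d lies in S^G_{1,b} (G = Z/pZ acting by x1 -> zeta x1,
   x2 -> zeta^b x2) iff c + b d = 0 (mod p). *)
Definition invariant_mon (p b : nat) (m : monomial) : Prop :=
  (m.1 + b * m.2) %% p = 0.

Definition inv_1b (p b : nat) (m : monomial) : Prop :=
  nonconstant m /\ invariant_mon p b m /\
  ~ (exists m1 m2 : monomial,
        nonconstant m1 /\ invariant_mon p b m1 /\
        nonconstant m2 /\ invariant_mon p b m2 /\ m = mon_mul m1 m2).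

From mathcomp Require Import all_boot zify.
Set Implicit Arguments. Unset Strict Implicit. Unset Printing Implicit Defensive.

(* Give x1^c x2^d the weight c + b d: invariance means that p divides the
   weight, so a nonconstant invariant weighs at least p and an invariant of
   weight exactly p cannot split into two.  If b' is the inverse of b mod p,
   multiplying by b' or by b shows that invariance equally means p | b' c + d.
   Hence x1^p, x1^(p-b) x2, x1^(p-2b) x2^2 (weight p for the first weight) and
   x2^p, x1 x2^(p-b') (weight p for the second) are five distinct elements of
   inv_{1,b}. *)

Definition weight (u v : nat) (m : monomial) : nat := u * m.1 + v * m.2.

Lemma weight_mon_mul u v m1 m2 :
  weight u v (mon_mul m1 m2) = weight u v m1 + weight u v m2.
Proof. by rewrite /weight /= !mulnDr addnACA. Qed.

Lemma weight_gt0 u v m :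
  0 < u -> 0 < v -> nonconstant m -> 0 < weight u v m.
Proof.
by move=> u_gt0 v_gt0; case: m => [[|c] [|d]] // _; rewrite /weight /=; lia.
Qed.

Section WeightDetectingInvariance.

Variables (p b u v : nat).
Hypotheses (u_gt0 : 0 < u) (v_gt0 : 0 < v).
Hypothesis invariant_weightE :
  forall m, invariant_mon p b m <-> p %| weight u v m.

Lemma invariant_weight_geq m :
  nonconstant m -> invariant_mon p b m -> p <= weight u v m.
Proof.
by move=> m_nc /invariant_weightE; apply/dvdn_leq/weight_gt0.
Qed.

Lemma inv_1b_of_weight_eq m : 0 < p -> weight u v m = p -> inv_1b p b m.
Proof.
move=> p_gt0 wm; have m_nc : nonconstant m.
  by move=> m0; move: wm; rewrite m0 /weight /= !muln0; lia.
split=> //; split; first by apply/invariant_weightE; rewrite wm.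
move=> [m1 [m2 [m1_nc [m1_inv [m2_nc [m2_inv m_eq]]]]]].
have := invariant_weight_geq m1_nc m1_inv.
have := invariant_weight_geq m2_nc m2_inv.
by move: wm; rewrite m_eq weight_mon_mul; lia.
Qed.

End WeightDetectingInvariance.

Lemma invariant_monE p b m : invariant_mon p b m <-> p %| weight 1 b m.
Proof. by rewrite /invariant_mon /weight /dvdn mul1n; split => [->|/eqP]. Qed.

Lemma invariant_mon_dualE p b b' m :
  b' * b = 1 %[mod p] -> invariant_mon p b m <-> p %| weight b' 1 m.
Proof.
case: m => c d bb'; rewrite invariant_monE /weight /= !mul1n.
have to_dual : b' * (c + b * d) = b' * c + d %[mod p].
  rewrite mulnDr mulnA -modnDmr -(modnMml (b' * b)) bb'.
  by rewrite modnMml mul1n modnDmr.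
have to_primal : b * (b' * c + d) = c + b * d %[mod p].
  rewrite mulnDr mulnA [b * b']mulnC -modnDml -(modnMml (b' * b)) bb'.
  by rewrite modnMml mul1n modnDml.
split=> [|/(dvdn_mull b)].
  by move=> /(dvdn_mull b'); rewrite /dvdn to_dual.
by rewrite /dvdn to_primal.
Qed.

Lemma modn_inverse p b :
  1 < p -> 0 < b -> coprime b p -> exists2 b', 0 < b' < p & b' * b = 1 %[mod p].
Proof.
move=> p_gt1 b_gt0; rewrite /coprime => /eqP gcd1.
case: (egcdnP p b_gt0) => km kn; rewrite gcd1 => def_km _.
have inv : (km %% p) * b = 1 %[mod p] by rewrite modnMml def_km modnMDl.
exists (km %% p) => //; rewrite ltn_pmod ?andbT; last lia.
by rewrite lt0n; apply: contra_eqN inv => /eqP ->; rewrite mul0n mod0n modn_small.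
Qed.

Theorem lemma3p15 (p b : nat) :
  prime p -> 1 < b -> 2 * b < p - 1 ->
  exists s : seq monomial,
    [/\ uniq s, 4 < size s & forall m, m \in s -> inv_1b p b m].
Proof.
move=> p_prime b_gt1 bp.
have p_gt0 := prime_gt0 p_prime; have b_gt0 : 0 < b by lia.
have b_coprime : coprime b p.
  by rewrite coprime_sym prime_coprime //; apply/negP => /(dvdn_leq b_gt0); lia.
have [b' /andP[b'_gt0 b'_lt] bb'] :=
  modn_inverse (prime_gt1 p_prime) b_gt0 b_coprime.
have primal m :=
  @inv_1b_of_weight_eq p b 1 b isT b_gt0 (invariant_monE p b) m p_gt0.
have dual m := @inv_1b_of_weight_eq p b b' 1 b'_gt0 isT
  (fun m => invariant_mon_dualE m bb') m p_gt0.
exists [:: (p, 0); (p - b, 1); (p - 2 * b, 2); (0, p); (1, p - b')]; split=> //.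
  by rewrite /= !inE !xpair_eqE; apply/and4P; split=> //; apply/negP; lia.
move=> m; rewrite !inE => /or4P[| | | /orP[]] /eqP ->.
- by apply: primal; rewrite /weight /=; lia.
- by apply: primal; rewrite /weight /=; lia.
- by apply: primal; rewrite /weight /=; lia.
- by apply: dual; rewrite /weight /=; lia.
- by apply: dual; rewrite /weight /=; lia.
Qed.
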